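(* Let $n\ge 1$ and consider the continuous-time networked SAIR(S) system: for each $i\in\{1,\dots,n\}$, \begin{align*} \dot{s}_{i}(t)&=-\beta_{i} s_{i}(t) \sum_{j=1}^n W_{ij}\big( a_{j}(t)+ p_{j}(t)\big)+\delta_{i} r_{i}(t),\\ \dot{a}_{i}(t)&=q\beta_{i} s_{i}(t) \sum_{j=1}^n W_{ij}\big( a_{j}(t)+ p_{j}(t)\big)-\sigma_{i} a_{i}(t)-\kappa_{i}a_{i}(t),\\ \dot{p}_{i}(t)&=(1-q)\beta_{i} s_{i}(t) \sum_{j=1}^n W_{ij}\big( a_{j}(t)+ p_{j}(t)\big)+\sigma_{i} a_{i}(t)-\gamma_{i} p_{i}(t),\\ \dot{r}_{i}(t)&=\kappa_{i} a_{i}(t)+\gamma_{i} p_{i}(t)-\delta_{i} r_{i}(t), \end{align*} where for all $i,j\in\{1,\dots,n\}$ we have $\beta_i,\gamma_i,\delta_i,\sigma_i,\kappa_i,W_{ij}\ge 0$ and $0\le q\le 1$. Suppose that $s_i(0),a_i(0),p_i(0),r_i(0)\in[0,1]$ and $s_i(0)+a_i(0)+p_i(0)+r_i(0)=1$ for all $i$. Then for all $t\ge 0$ and all $i\in\{1,\dots,n\}$, $s_i(t),a_i(t),p_i(t),r_i(t)\in[0,1]$ and $s_i(t)+a_i(t)+p_i(t)+r_i(t)=1$.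
   Context: The variables $s_i,a_i,p_i,r_i$ are the proportions of subpopulation $i$ that are susceptible, asymptomatic-infected, symptomatic-infected and recovered; $W=[W_{ij}]$ is the adjacency matrix of the interconnection network; $\beta_i$ is the transmission rate, $\sigma_i$ the asymptomatic-to-symptomatic progression rate, $\kappa_i,\gamma_i$ the recovery rates of asymptomatic and symptomatic infected, $\delta_i$ the rate of loss of immunity, and $q$ the proportion of new infections that are asymptomatic. *)

From HB Require Import structures.
From mathcomp Require Import all_boot all_order all_algebra.
From mathcomp Require Import all_classical all_reals all_analysis.
Set Implicit Arguments. Unset Strict Implicit. Unset Printing Implicit Defensive.
Import Order.TTheory GRing.Theory Num.Theory.
Import numFieldNormedType.Exports.
Local Open Scope ring_scope.

Definition pressure (R : realType) (n : nat) (W : 'I_n -> 'I_n -> R)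
  (a p : 'I_n -> R -> R) (i : 'I_n) (t : R) : R :=
  \sum_(j < n) W i j * (a j t + p j t).

(* Adding the four equations of subpopulation i, the right-hand sides cancel,
   so s_i + a_i + p_i + r_i stays equal to 1.  For nonnegativity, perturb every
   compartment by eps * exp(M t).  If a perturbed compartment first reaches 0
   at time tau, all compartments are >= -e there, with e = eps * exp(M tau);
   the conservation law bounds them by 4, and then the right-hand side of the
   vanishing compartment is >= -K_i e with K_i < M, so the perturbed derivative
   is positive: impossible at a first zero.  Letting eps go to 0 gives
   nonnegativity, and the conservation law gives the bounds by 1. *)

From HB Require Import structures.
From mathcomp Require Import all_boot all_order all_algebra.
From mathcomp Require Import all_classical all_reals all_analysis.
From mathcomp Require Import ring lra.

Set Implicit Arguments.
Unset Strict Implicit.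
Unset Printing Implicit Defensive.

Import Order.TTheory GRing.Theory Num.Theory.
Import numFieldNormedType.Exports.
Local Open Scope ring_scope.
Local Open Scope classical_set_scope.

Section Calculus.
Variable R : realType.
Implicit Types (f g : R -> R) (a x c d M : R).

Lemma is_derive_continuous f x d : is_derive x 1 f d -> {for x, continuous f}.
Proof. by case=> /derivable1_diffP/differentiable_continuous. Qed.

Lemma is_derive_0_is_cst_from f a :
  (forall t, a <= t -> is_derive t 1 f 0) -> forall t, a <= t -> f t = f a.
Proof.
move=> f'0 t at_.
have f'0_in x : x \in `]a, t[%R -> is_derive x 1 f 0.
  by rewrite in_itv => /andP[/ltW ax _]; exact: f'0.
have f_cont : {within `[a, t], continuous f}.
  apply: continuous_in_subspaceT => x; rewrite inE /= in_itv => /andP[ax _].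
  exact: is_derive_continuous (f'0 x ax).
have [c _] := MVT_segment at_ f'0_in f_cont.
by rewrite mul0r => /eqP; rewrite subr_eq0 => /eqP.
Qed.

Lemma is_derive_gt0_lt_left f x d :
  is_derive x 1 f d -> 0 < d -> \forall y \near x^'-, f y < f x.
Proof.
move=> [fx' fx'_eq] d_gt0.
have : \forall h \near 0^', 0 < h^-1 *: ((f \o shift x) (h *: 1) - f x).
  by apply: (cvgr_gt d) => //; rewrite -fx'_eq; exact: fx'.
rewrite !near_withinE => /nbhs_ballP[e /= e_gt0 quot_gt0].
apply/nbhs_ballP; exists e => // y xy_e y_lt_x.
have yx_lt0 : y - x < 0 by rewrite subr_lt0.
have : ball 0 e (y - x) by rewrite /ball /= sub0r opprB.
move=> /quot_gt0 /(_ (ltr0_neq0 yx_lt0)) /=.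
by rewrite [_%:A]mulr1 subrK [_ *: _]/(_ * _) nmulr_rgt0 ?invr_lt0// subr_lt0.
Qed.

Lemma is_derive_add_expR g x d c M : is_derive x 1 g d ->
  is_derive x 1 (fun t => g t + c * expR (M * t)) (d + c * (M * expR (M * x))).
Proof.
by move=> g'; apply: is_derive_eq; rewrite [_%:A]mulr1 mulrC.
Qed.

End Calculus.

Section PositivityBarrier.
Variables (R : realType) (I : finType) (f : I -> R -> R) (T : R).
Hypothesis T_ge0 : 0 <= T.
Hypothesis f_cont : forall k t, 0 <= t <= T -> {for t, continuous (f k)}.
Hypothesis f0_gt0 : forall k, 0 < f k 0.
Hypothesis f'_gt0_at_first_zero : forall k tau, 0 < tau <= T ->
  (forall j u, 0 <= u < tau -> 0 < f j u) -> (forall j, 0 <= f j tau) ->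
  f k tau = 0 -> exists2 d, is_derive tau 1 (f k) d & 0 < d.

Let pos_until := [set t | 0 <= t <= T /\ forall k u, 0 <= u <= t -> 0 < f k u].
Let tau := sup pos_until.

Let pos_until0 : pos_until 0.
Proof.
split=> [|k u]; first by rewrite lexx T_ge0.
by move=> /andP[u_ge0 u_le0]; rewrite (@le_anti _ _ u 0) ?u_ge0 ?u_le0.
Qed.

Let pos_until_has_sup : has_sup pos_until.
Proof. by split; [exists 0 | exists T => t [/andP[_ ->]]]. Qed.

Let tau_ge0 : 0 <= tau. Proof. exact: sup_upper_bound. Qed.

Let tau_leT : tau <= T.
Proof. by apply: ge_sup => [|t [/andP[_ ->]]]; first by exists 0. Qed.

Let gt0_before_tau k u : 0 <= u < tau -> 0 < f k u.
Proof.
move=> /andP[u_ge0 u_lt]; have tau_u_gt0 : 0 < tau - u by rewrite subr_gt0.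
have [t [_ pos_t] ut] := sup_adherent tau_u_gt0 pos_until_has_sup.
by rewrite -/tau in ut; apply: pos_t; rewrite u_ge0 /=; lra.
Qed.

Let gt0_near_left_tau k : 0 < tau -> \forall y \near tau^'-, 0 < f k y.
Proof.
move=> tau_gt0; near=> y; apply: gt0_before_tau; apply/andP; split.
  by apply: ltW; near: y; exact: nbhs_left_gt.
by near: y; exact: nbhs_left_lt.
Unshelve. all: by end_near.
Qed.

Let ge0_at_tau k : 0 <= f k tau.
Proof.
have [<-|tau_gt0] := eqVneq 0 tau; first exact: ltW.
have {}tau_gt0 : 0 < tau by rewrite lt_neqAle tau_gt0 tau_ge0.
have fk_left : f k y @[y --> tau^'-] --> f k tau.
  by apply: cvg_at_left_filter; apply: f_cont; rewrite tau_ge0 tau_leT.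
rewrite -(cvg_lim _ fk_left) //; apply: limr_ge; first exact: cvgP fk_left.
by apply: filterS (gt0_near_left_tau k tau_gt0) => y /ltW.
Qed.

Let gt0_at_tau k : 0 < f k tau.
Proof.
rewrite lt_neqAle ge0_at_tau andbT; apply/negP => /eqP fk_tau0.
have tau_gt0 : 0 < tau.
  rewrite lt_neqAle tau_ge0 andbT; apply/eqP => tau0.
  by rewrite -tau0 in fk_tau0; move: (f0_gt0 k); rewrite -fk_tau0 ltxx.
have [d fk' d_gt0] : exists2 d, is_derive tau 1 (f k) d & 0 < d.
  by apply: f'_gt0_at_first_zero; rewrite ?tau_gt0 ?tau_leT.
near tau^'- => y.
have fy_gt0 : 0 < f k y by near: y; exact: gt0_near_left_tau.
have : f k y < f k tau by near: y; exact: is_derive_gt0_lt_left fk' d_gt0.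
by rewrite -fk_tau0 ltNge (ltW fy_gt0).
Unshelve. all: by end_near.
Qed.

Let tau_eqT : tau = T.
Proof.
apply/eqP; rewrite eq_le tau_leT leNgt /=; apply/negP => tau_ltT.
have : \forall y \near tau, forall j, 0 < f j y.
  apply: (@filter_forall _ _ (fun j y => 0 < f j y) (nbhs tau) _) => j.
  have fj_cont : {for tau, continuous (f j)} by apply: f_cont; rewrite tau_ge0 tau_leT.
  exact: (cvgr_gt _ fj_cont _ (gt0_at_tau j)).
case/nbhs_ballP => e /= e_gt0 gt0_near_tau.
pose t := Num.min (tau + e / 2) T.
have t_gt : tau < t by rewrite lt_min tau_ltT andbT; lra.
have t_le : t <= tau + e / 2 by rewrite ge_min lexx.
have t_leT : t <= T by rewrite ge_min lexx orbT.
have : pos_until t.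
  split=> [|k u /andP[u_ge0 u_le]]; first by rewrite t_leT andbT (le_trans tau_ge0) ?ltW.
  have [u_lt|u_ge] := ltP u tau; first by apply: gt0_before_tau; rewrite u_ge0.
  by apply: gt0_near_tau; rewrite /ball /= ler0_norm; lra.
by move=> /(sup_upper_bound pos_until_has_sup); rewrite -/tau; lra.
Qed.

Lemma gt0_barrier k t : 0 <= t <= T -> 0 < f k t.
Proof.
move=> /andP[t_ge0 t_leT]; have [t_lt|t_ge] := ltP t tau.
  by apply: gt0_before_tau; rewrite t_ge0.
have -> : t = tau by apply/le_anti; rewrite t_ge tau_eqT t_leT.
exact: gt0_at_tau.
Qed.

End PositivityBarrier.

Section Bounds.
Variable R : realFieldType.

Lemma weighted_sum_bounds (I : finType) (w x : I -> R) (lo hi : R) :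
  (forall j, 0 <= w j) -> (forall j, lo <= x j <= hi) ->
  lo * \sum_j w j <= \sum_j w j * x j <= hi * \sum_j w j.
Proof.
move=> w_ge0 x_bnd; rewrite !mulr_sumr; apply/andP.
by split; apply: ler_sum => j _; have /andP[lo_x x_hi] := x_bnd j;
  rewrite [w j * _]mulrC; apply: ler_wpM2r.
Qed.

Lemma mulr_lbound (x y e d u v : R) : 0 <= u -> 0 <= v -> 0 <= e -> 0 <= d ->
  -e <= x <= u -> -d <= y <= v -> -(e * v + u * d) <= x * y.
Proof.
move=> u_ge0 v_ge0 e_ge0 d_ge0 /andP[xl xu] /andP[yl yu].
by have [x_ge0|x_lt0] := lerP 0 x; have [y_ge0|y_lt0] := lerP 0 y; nra.
Qed.

End Bounds.

Section SAIR.
Variables (R : realType) (n : nat).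
Variables (beta gamma delta sigma kappa : 'I_n -> R) (W : 'I_n -> 'I_n -> R) (q : R).
Variables (s a p r : 'I_n -> R -> R).
Hypotheses (beta_ge0 : forall i, 0 <= beta i) (gamma_ge0 : forall i, 0 <= gamma i)
  (delta_ge0 : forall i, 0 <= delta i) (sigma_ge0 : forall i, 0 <= sigma i)
  (kappa_ge0 : forall i, 0 <= kappa i) (W_ge0 : forall i j, 0 <= W i j)
  (q_ge0 : 0 <= q) (q_le1 : q <= 1).

Implicit Types (i j : 'I_n) (t u : R).

Local Notation P := (pressure W a p).

Let s_rhs i t := - beta i * s i t * P i t + delta i * r i t.
Let a_rhs i t := q * beta i * s i t * P i t - sigma i * a i t - kappa i * a i t.
Let p_rhs i t := (1 - q) * beta i * s i t * P i t + sigma i * a i t - gamma i * p i t.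
Let r_rhs i t := kappa i * a i t + gamma i * p i t - delta i * r i t.

Hypotheses (s_deriv : forall i t, 0 <= t -> is_derive t 1 (s i) (s_rhs i t))
  (a_deriv : forall i t, 0 <= t -> is_derive t 1 (a i) (a_rhs i t))
  (p_deriv : forall i t, 0 <= t -> is_derive t 1 (p i) (p_rhs i t))
  (r_deriv : forall i t, 0 <= t -> is_derive t 1 (r i) (r_rhs i t)).

Hypothesis total0 : forall i, s i 0 + a i 0 + p i 0 + r i 0 = 1.

Lemma sair_total_eq1 i t : 0 <= t -> s i t + a i t + p i t + r i t = 1.
Proof.
rewrite -(total0 i).
apply: (@is_derive_0_is_cst_from _ (fun u => s i u + a i u + p i u + r i u)) => u u_ge0.
have ds := s_deriv i u_ge0; have da := a_deriv i u_ge0.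
have dp := p_deriv i u_ge0; have dr := r_deriv i u_ge0.
by apply: is_derive_eq; rewrite /s_rhs /a_rhs /p_rhs /r_rhs; ring.
Qed.

Let X (c : 'I_4) i := match val c with 0 => s i | 1 => a i | 2 => p i | _ => r i end.
Let X_rhs (c : 'I_4) i t :=
  match val c with 0 => s_rhs i t | 1 => a_rhs i t | 2 => p_rhs i t | _ => r_rhs i t end.

Let X_deriv c i t : 0 <= t -> is_derive t 1 (X c i) (X_rhs c i t).
Proof.
move=> t_ge0; rewrite /X /X_rhs.
by case: c => [[|[|[|c]]] ?] /=; [apply: s_deriv | apply: a_deriv | apply: p_deriv | apply: r_deriv].
Qed.

Let X_components (Q : R -> Prop) t : (forall c j, Q (X c j t)) ->
  forall j, [/\ Q (s j t), Q (a j t), Q (p j t) & Q (r j t)].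
Proof.
by move=> QX j; split; [apply: (QX (@Ordinal 4 0 isT)) | apply: (QX (@Ordinal 4 1 isT))
  | apply: (QX (@Ordinal 4 2 isT)) | apply: (QX (@Ordinal 4 3 isT))].
Qed.

Let w i := \sum_j W i j.
Let K i := 12 * beta i * w i + delta i + sigma i + kappa i + gamma i.
Let M := \sum_i K i + 1.

Let w_ge0 i : 0 <= w i.
Proof. exact: sumr_ge0. Qed.

Let K_ge0 i : 0 <= K i.
Proof.
have := mulr_ge0 (beta_ge0 i) (w_ge0 i); have := delta_ge0 i; have := sigma_ge0 i.
by have := kappa_ge0 i; have := gamma_ge0 i; rewrite /K; lra.
Qed.

Let M_gt0 : 0 < M.
Proof. by apply: ltr_wpDl; [apply: sumr_ge0 => i _; exact: K_ge0 | exact: ltr01]. Qed.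

Let K_lt_M i : K i < M.
Proof.
by rewrite /M (bigD1 i) //= -addrA ltrDl ltr_wpDl ?sumr_ge0 // => j _; exact: K_ge0.
Qed.

Let pressure_products_ge i t e : 0 <= t -> 0 < e <= 1 -> (forall c j, -e <= X c j t) ->
  -(12 * e * w i) <= s i t * P i t /\ -(2 * e * w i) <= e * P i t.
Proof.
move=> t_ge0 /andP[e_gt0 e_le1] X_ge.
have comp_ge := X_components (Q := fun x => -e <= x) X_ge.
have comp_le4 j : [/\ s j t <= 4, -(2 * e) <= a j t + p j t & a j t + p j t <= 4].
  by have [? ? ? ?] := comp_ge j; have := sair_total_eq1 j t_ge0; split; lra.
have /andP[P_ge P_le] : -(2 * e) * w i <= P i t <= 4 * w i.
  by apply: weighted_sum_bounds => // j; have [_ -> ->] := comp_le4 j.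
rewrite mulNr in P_ge.
have [s_ge _ _ _] := comp_ge i; have [s_le _ _] := comp_le4 i.
have w_ge0i := w_ge0 i; have ew_ge0 := mulr_ge0 (ltW e_gt0) w_ge0i; split.
  have : -(e * (4 * w i) + 4 * (2 * e * w i)) <= s i t * P i t.
    by apply: mulr_lbound; rewrite ?s_ge ?s_le ?P_ge ?P_le //; lra.
  lra.
have : 0 <= e * w i * (1 - e) by rewrite mulr_ge0 ?subr_ge0.
by have := ler_wpM2l (ltW e_gt0) P_ge; lra.
Qed.

Let X_rhs_ge_at_touch c i t e : 0 <= t -> 0 < e <= 1 ->
  (forall c j, -e <= X c j t) -> X c i t = -e -> -(K i * e) <= X_rhs c i t.
Proof.
move=> t_ge0 e_bnd X_ge Xi_e; have /andP[e_gt0 _] := e_bnd.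
have [sP_ge eP_ge] := pressure_products_ge i t_ge0 e_bnd X_ge.
have [s_ge a_ge p_ge r_ge] := X_components (Q := fun x => -e <= x) X_ge i.
have mul_ge c' x : 0 <= c' -> -e <= x -> -(c' * e) <= c' * x /\ 0 <= c' * e.
  move=> c'_ge0 x_ge; rewrite mulr_ge0 ?(ltW e_gt0) // -mulrN.
  by split => //; apply: ler_wpM2l.
have [? ?] := mul_ge _ _ (delta_ge0 i) r_ge; have [? ?] := mul_ge _ _ (sigma_ge0 i) a_ge.
have [? ?] := mul_ge _ _ (kappa_ge0 i) a_ge; have [? ?] := mul_ge _ _ (gamma_ge0 i) p_ge.
have q'_ge0 : 0 <= 1 - q by rewrite subr_ge0.
have bwe_ge0 := mulr_ge0 (beta_ge0 i) (mulr_ge0 (ltW e_gt0) (w_ge0 i)).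
have := mulr_ge0 q_ge0 bwe_ge0; have := mulr_ge0 q'_ge0 bwe_ge0.
have := ler_wpM2l (beta_ge0 i) eP_ge.
have := ler_wpM2l (mulr_ge0 q_ge0 (beta_ge0 i)) sP_ge.
have := ler_wpM2l (mulr_ge0 q'_ge0 (beta_ge0 i)) sP_ge.
move: Xi_e; rewrite /K /X /X_rhs /s_rhs /a_rhs /p_rhs /r_rhs.
by case: c => [[|[|[|c]]] ?] /= ->; lra.
Qed.

Hypothesis init_ge0 : forall i, [/\ 0 <= s i 0, 0 <= a i 0, 0 <= p i 0 & 0 <= r i 0].

Let X0_ge0 c i : 0 <= X c i 0.
Proof. by have [] := init_ge0 i; case: c => [[|[|[|c]]] ?]. Qed.

Let perturbed_gt0 c i eps T t : 0 < eps -> eps * expR (M * T) <= 1 ->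
  0 <= t <= T -> 0 < X c i t + eps * expR (M * t).
Proof.
move=> eps_gt0 epsT_le1 t_in; have T_ge0 : 0 <= T by case/andP: t_in => /le_trans; apply.
pose f (k : 'I_4 * 'I_n) t := X k.1 k.2 t + eps * expR (M * t).
apply: (@gt0_barrier _ _ f T T_ge0 _ _ _ (c, i) _ t_in).
- move=> k u /andP[u_ge0 _].
  exact: is_derive_continuous (is_derive_add_expR _ _ (X_deriv k.1 k.2 u_ge0)).
- by move=> [c' j]; rewrite /f /= mulr0 expR0 mulr1; have := X0_ge0 c' j; lra.
move=> [c' j] tau /andP[tau_gt0 tau_leT] _ f_ge0; rewrite /f /= => f_eq0.
set e := eps * expR (M * tau) in f_eq0 *.
have e_gt0 : 0 < e by rewrite mulr_gt0 ?expR_gt0.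
have e_le1 : e <= 1 by apply: le_trans epsT_le1; rewrite ler_pM2l // ler_expR ler_pM2l.
have X_ge c'' j' : -e <= X c'' j' tau by have := f_ge0 (c'', j'); rewrite /f /= -/e; lra.
exists (X_rhs c' j tau + eps * (M * expR (M * tau))).
  exact: is_derive_add_expR _ _ (X_deriv c' j (ltW tau_gt0)).
have Xj_e : X c' j tau = -e by lra.
have := X_rhs_ge_at_touch (ltW tau_gt0) (introT andP (conj e_gt0 e_le1)) X_ge Xj_e.
have : K j * e < M * e by rewrite ltr_pM2r.
by rewrite [eps * (M * _)]mulrCA -/e; lra.
Qed.

Let X_ge0 c i t : 0 <= t -> 0 <= X c i t.
Proof.
move=> t_ge0; apply/ler_addgt0Pr => m m_gt0.
pose m' := Num.min m 1; pose eps := m' * expR (- (M * t)).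
have m'_gt0 : 0 < m' by rewrite lt_min m_gt0 ltr01.
have m'_le : m' <= m by rewrite ge_min lexx.
have eps_exp : eps * expR (M * t) = m' by rewrite -mulrA -expRD addNr expR0 mulr1.
have eps_gt0 : 0 < eps by rewrite mulr_gt0 ?expR_gt0.
have epsT_le1 : eps * expR (M * t) <= 1 by rewrite eps_exp ge_min lexx orbT.
have t_in : 0 <= t <= t by rewrite t_ge0 lexx.
by have := perturbed_gt0 c i eps_gt0 epsT_le1 t_in; rewrite eps_exp; lra.
Qed.

Lemma sair_ge0 i t : 0 <= t -> [/\ 0 <= s i t, 0 <= a i t, 0 <= p i t & 0 <= r i t].
Proof. by move=> t_ge0; apply: (X_components (Q := fun x => 0 <= x)) => c j; exact: X_ge0. Qed.

End SAIR.

Theorem lemma1 (R : realType) (n : nat) (Hn : (0 < n)%N)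
  (beta gamma delta sigma kappa : 'I_n -> R) (W : 'I_n -> 'I_n -> R) (q : R)
  (s a p r : 'I_n -> R -> R)
  (Hbeta : forall i, 0 <= beta i) (Hgamma : forall i, 0 <= gamma i)
  (Hdelta : forall i, 0 <= delta i) (Hsigma : forall i, 0 <= sigma i)
  (Hkappa : forall i, 0 <= kappa i) (HW : forall i j, 0 <= W i j)
  (Hq0 : 0 <= q) (Hq1 : q <= 1)
  (Hs' : forall i (t : R), 0 <= t -> is_derive t 1 (s i)
     (- beta i * s i t * pressure W a p i t + delta i * r i t))
  (Ha' : forall i (t : R), 0 <= t -> is_derive t 1 (a i)
     (q * beta i * s i t * pressure W a p i t - sigma i * a i t - kappa i * a i t))
  (Hp' : forall i (t : R), 0 <= t -> is_derive t 1 (p i)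
     ((1 - q) * beta i * s i t * pressure W a p i t + sigma i * a i t - gamma i * p i t))
  (Hr' : forall i (t : R), 0 <= t -> is_derive t 1 (r i)
     (kappa i * a i t + gamma i * p i t - delta i * r i t))
  (H0 : forall i, [/\ 0 <= s i 0 <= 1, 0 <= a i 0 <= 1, 0 <= p i 0 <= 1
                   & 0 <= r i 0 <= 1])
  (Hsum0 : forall i, s i 0 + a i 0 + p i 0 + r i 0 = 1) :
  forall (t : R) i, 0 <= t ->
    [/\ 0 <= s i t <= 1, 0 <= a i t <= 1, 0 <= p i t <= 1, 0 <= r i t <= 1
      & s i t + a i t + p i t + r i t = 1].
Proof.
move=> t i t_ge0.
have init_ge0 j : [/\ 0 <= s j 0, 0 <= a j 0, 0 <= p j 0 & 0 <= r j 0].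
  by have [/andP[? _] /andP[? _] /andP[? _] /andP[? _]] := H0 j.
have total := sair_total_eq1 Hs' Ha' Hp' Hr' Hsum0 i t_ge0.
have [s_ge0 a_ge0 p_ge0 r_ge0] := sair_ge0 Hbeta Hgamma Hdelta Hsigma Hkappa HW Hq0 Hq1
  Hs' Ha' Hp' Hr' Hsum0 init_ge0 i t_ge0.
by split; rewrite // ?s_ge0 ?a_ge0 ?p_ge0 ?r_ge0 /=; lra.
Qed.
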